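(* Let $(X,Y,A)$ be a random triple with joint distribution $\mathcal{D}$, where $X$ takes values in a measurable space $\mathcal{X}$, $Y\in\{0,1\}$, and $A$ is a discrete random variable with values in $\mathcal{A}$. Let $f:\mathcal{X}\to[0,1]$ be any measurable predictor. Then \[ \mathrm{Suf}_f \le 4\,\mathbb{E}_{A,X}\big[\,|f(X)-f^{\mathrm{Bayes}}_A(X)|\,\big]. \] In particular, if $|\mathcal{A}|<\infty$ and $A$ is uniformly distributed, $\mathcal{D}(A=a)=1/|\mathcal{A}|$ for all $a\in\mathcal{A}$, then \[ \mathrm{Suf}_f \le \frac{4}{|\mathcal{A}|}\sum_{a\in\mathcal{A}} \mathbb{E}_X\big[\,|f(X)-f^{\mathrm{Bayes}}_{A=a}(X)|\;\big|\;A=a\big]. \]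
   Context: The $A$-group Bayes predictor is $f^{\mathrm{Bayes}}_A(X)=\mathbb{E}[Y\mid X,A]$, a function of $(X,A)$; for fixed $a$, $f^{\mathrm{Bayes}}_{A=a}(x)=\mathbb{E}[Y\mid X=x,A=a]$. The group sufficiency gap of a predictor $f$ is $\mathrm{Suf}_f=\mathbb{E}_{A,X}\big[\,|\mathbb{E}[Y\mid f(X)]-\mathbb{E}[Y\mid f(X),A]|\,\big]$, where $\mathbb{E}_{A,X}$ denotes expectation with respect to the marginal distribution of $(A,X)$ under $\mathcal{D}$. *)

From HB Require Import structures.
From mathcomp Require Import all_boot all_order all_algebra.
From mathcomp Require Import all_classical all_reals all_analysis.
Set Implicit Arguments. Unset Strict Implicit. Unset Printing Implicit Defensive.
Import Order.TTheory GRing.Theory Num.Theory.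
Local Open Scope classical_set_scope.
Local Open Scope ring_scope.

(* [is_cond_exp P Y Z g] : the function [g : U -> R] gives a version of the
   conditional expectation E[Y | Z], i.e. g o Z is a version of E[Y | sigma(Z)]
   (Doob--Dynkin factorisation): g is measurable, g o Z is P-integrable, and
   for every measurable B of the codomain of Z,
     E[Y ; Z in B] = E[g(Z) ; Z in B]. *)
Definition is_cond_exp {d dU : measure_display} {T : measurableType d}
  {R : realType} (P : probability T R) {U : measurableType dU}
  (Y : T -> R) (Z : T -> U) (g : U -> R) : Prop :=
  measurable_fun setT g /\
  P.-integrable setT (fun w => (g (Z w))%:E) /\
  forall B : set U, measurable B ->
    (\int[P]_(w in Z @^-1` B) (Y w)%:E = \int[P]_(w in Z @^-1` B) (g (Z w))%:E)%E.

From HB Require Import structures.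
From mathcomp Require Import all_boot all_order all_algebra.
From mathcomp Require Import all_classical all_reals all_analysis.
From mathcomp Require Import finmap measurable_realfun.
Import Order.TTheory GRing.Theory Num.Theory.
Local Open Scope classical_set_scope.
Local Open Scope ring_scope.

(* Let g(f X), h(f X, A) and fB(X, A) be E[Y | f X], E[Y | f X, A] and
   E[Y | X, A].  If Z = phi(W) is coarser than W, then E[Y | Z] is L1-closer to
   any psi(Z) than E[Y | W]: on the sigma(Z)-event {E[Y | Z] <= psi(Z)} the
   expectation of |psi(Z) - E[Y | Z]| is that of psi(Z) - E[Y | Z], which the
   tower property turns into that of psi(Z) - E[Y | W]; on the complement the
   same holds with the signs reversed.  Applying this to psi(Z) = f X, once with
   Z = f X and once with Z = (f X, A), both coarser than W = (X, A), and using
   the triangle inequality through f X gives Suf_f <= 2 E|f X - fB(X, A)|.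
   When A is uniform the weights 1 / P(A = a) all equal |A|, and splitting the
   expectation along the fibres of A gives the second bound. *)

Section cond_exp_L1.
Context {d : measure_display} {T : measurableType d} {R : realType}.
Variable P : probability T R.

Lemma measurable_EFin_abs_sub (F G : T -> R) :
  measurable_fun setT F -> measurable_fun setT G ->
  measurable_fun setT (fun w => (`|F w - G w|)%:E).
Proof.
move=> mF mG; apply/measurable_EFinP.
by apply: measurableT_comp; [exact: normr_measurable|exact: measurable_funB].
Qed.

Lemma ge0_integral_setUC (S : set T) (F : T -> \bar R) : measurable S ->
  measurable_fun setT F -> (forall w, (0 <= F w)%E) ->
  (\int[P]_w F w = \int[P]_(w in S) F w + \int[P]_(w in ~` S) F w)%E.
Proof.
move=> mS mF F0; rewrite -[in LHS](setUv S).
apply: ge0_integral_setU; rewrite ?setUv //; first exact: measurableC.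
by rewrite disj_set2E setICr.
Qed.

Lemma le_integral_sub_abs (S : set T) (F G F' G' : T -> R) : measurable S ->
  P.-integrable S (EFin \o F) -> P.-integrable S (EFin \o G) ->
  P.-integrable S (EFin \o F') -> P.-integrable S (EFin \o G') ->
  (\int[P]_(w in S) (F w)%:E = \int[P]_(w in S) (F' w)%:E)%E ->
  (\int[P]_(w in S) (G w)%:E = \int[P]_(w in S) (G' w)%:E)%E ->
  (\int[P]_(w in S) ((F w)%:E - (G w)%:E)
     <= \int[P]_(w in S) (`|F' w - G' w|)%:E)%E.
Proof.
move=> mS iF iG iF' iG' eqF eqG.
rewrite integralB_EFin // eqF eqG -integralB_EFin //.
apply: le_trans (lee_abs _) _.
have mFG' := measurable_int _ (integrableB mS iF' iG').
apply: le_trans (le_abse_integral P mS mFG') _.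
by under eq_integral do rewrite -EFinB abse_EFin.
Qed.

Lemma integral_cond_exp_coarsen {dU dV : measure_display}
    {U : measurableType dU} {V : measurableType dV}
    (Y : T -> R) (Z : T -> U) (W : T -> V) (phi : V -> U)
    (g : U -> R) (k : V -> R) (C : set U) :
  measurable_fun setT phi -> (forall w, Z w = phi (W w)) ->
  is_cond_exp P Y Z g -> is_cond_exp P Y W k -> measurable C ->
  (\int[P]_(w in Z @^-1` C) (g (Z w))%:E
     = \int[P]_(w in Z @^-1` C) (k (W w))%:E)%E.
Proof.
move=> mphi hZ [_ [_ hg]] [_ [_ hk]] mC.
have eZ : Z @^-1` C = W @^-1` (phi @^-1` C).
  by apply/seteqP; split=> w /=; rewrite hZ.
rewrite -hg // eZ hk //.
by rewrite -[_ @^-1` _]setTI; exact: mphi.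
Qed.

Lemma cond_exp_coarse_L1_le {dU dV : measure_display}
    {U : measurableType dU} {V : measurableType dV}
    (Y : T -> R) (Z : T -> U) (W : T -> V) (phi : V -> U) (psi : U -> R)
    (g : U -> R) (k : V -> R) :
  measurable_fun setT Z -> measurable_fun setT phi -> measurable_fun setT psi ->
  (forall w, Z w = phi (W w)) ->
  P.-integrable setT (fun w => (psi (Z w))%:E) ->
  is_cond_exp P Y Z g -> is_cond_exp P Y W k ->
  (\int[P]_w (`|psi (Z w) - g (Z w)|)%:E
     <= \int[P]_w (`|psi (Z w) - k (W w)|)%:E)%E.
Proof.
move=> mZ mphi mpsi hZ ipsi cg ck.
have [mg [ig _]] := cg; have [_ [ik _]] := ck.
have iS (F : T -> R) S : measurable S ->
    P.-integrable setT (EFin \o F) -> P.-integrable S (EFin \o F).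
  by move=> mS; exact: integrableS.
have mpre C : measurable C -> measurable (Z @^-1` C).
  by move=> mC; rewrite -[_ @^-1` _]setTI; exact: mZ.
have mR (F : T -> R) : P.-integrable setT (EFin \o F) -> measurable_fun setT F.
  by move=> iF; apply/measurable_EFinP; exact: measurable_int iF.
set B := [set u | g u <= psi u].
have mB : measurable B.
  by have := measurable_fun_le measurableT mg mpsi; rewrite setTI.
have split_int (F : T -> R) : measurable_fun setT F ->
    (\int[P]_w (`|psi (Z w) - F w|)%:E
     = \int[P]_(w in Z @^-1` B) (`|psi (Z w) - F w|)%:E
       + \int[P]_(w in Z @^-1` (~` B)) (`|psi (Z w) - F w|)%:E)%E.
  move=> mF; rewrite preimage_setC (ge0_integral_setUC (Z @^-1` B)) //.
  - exact: mpre.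
  - by apply: measurable_EFin_abs_sub => //; exact: mR.
have eq_gk C : measurable C ->
    (\int[P]_(w in Z @^-1` C) (g (Z w))%:E
     = \int[P]_(w in Z @^-1` C) (k (W w))%:E)%E.
  by move=> mC; exact: integral_cond_exp_coarsen mphi hZ cg ck mC.
rewrite split_int ?split_int; [apply: leeD| exact: mR ik| exact: mR ig].
- have mS := mpre _ mB.
  rewrite (eq_integral (fun w => (psi (Z w))%:E - (g (Z w))%:E)%E); last first.
    by move=> w /set_mem gw; rewrite ger0_norm ?EFinB // subr_ge0.
  by apply: le_integral_sub_abs; rewrite // ?eq_gk //; exact: iS.
- have mS := mpre _ (measurableC mB).
  rewrite (eq_integral (fun w => (g (Z w))%:E - (psi (Z w))%:E)%E); last first.
    move=> w /set_mem /negP; rewrite -ltNge => /ltW gw.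
    by rewrite distrC ger0_norm ?EFinB // subr_ge0.
  under [X in (_ <= X)%E]eq_integral do rewrite distrC.
  apply: le_integral_sub_abs; rewrite ?eq_gk //; try exact: iS.
  exact: measurableC.
Qed.

Lemma sufficiency_gap_le {dX dA : measure_display}
    {XX : measurableType dX} {AA : measurableType dA}
    (X : T -> XX) (Y : T -> R) (A : T -> AA) (f : XX -> R)
    (g : R -> R) (h : R * AA -> R) (fB : XX * AA -> R) :
  measurable_fun setT X -> measurable_fun setT A -> measurable_fun setT f ->
  P.-integrable setT (fun w => (f (X w))%:E) ->
  is_cond_exp P Y (fun w => f (X w)) g ->
  is_cond_exp P Y (fun w => (f (X w), A w)) h ->
  is_cond_exp P Y (fun w => (X w, A w)) fB ->
  (\int[P]_w (`|g (f (X w)) - h (f (X w), A w)|)%:E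
     <= 2%:E * \int[P]_w (`|f (X w) - fB (X w, A w)|)%:E)%E.
Proof.
move=> mX mA mf ifX cg ch cfB.
have mfX : measurable_fun setT (fun w => f (X w)) := measurableT_comp mf mX.
have mfXA : measurable_fun setT (fun w => (f (X w), A w)).
  exact: measurable_fun_pair mfX mA.
have mgfX : measurable_fun setT (fun w => g (f (X w))).
  exact: measurableT_comp cg.1 mfX.
have mhfXA : measurable_fun setT (fun w => h (f (X w), A w)).
  exact: measurableT_comp ch.1 mfXA.
have le_g : (\int[P]_w (`|f (X w) - g (f (X w))|)%:E
             <= \int[P]_w (`|f (X w) - fB (X w, A w)|)%:E)%E.
  apply: (cond_exp_coarse_L1_le Y _ _ (fun p => f p.1) id) => //.
  exact: measurableT_comp mf measurable_fst.
have le_h : (\int[P]_w (`|f (X w) - h (f (X w), A w)|)%:E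
             <= \int[P]_w (`|f (X w) - fB (X w, A w)|)%:E)%E.
  apply: (cond_exp_coarse_L1_le Y (fun w => (f (X w), A w)) (fun w => (X w, A w))
    (fun p => (f p.1, p.2)) fst) => //.
  exact: measurable_fun_pair (measurableT_comp mf measurable_fst) measurable_snd.
have -> : (2%:E = 1 + 1 :> \bar R)%E by rewrite -EFinD.
rewrite ge0_muleDl // !mul1e.
apply: le_trans (leeD le_g le_h).
rewrite -ge0_integralD //; try exact: measurable_EFin_abs_sub.
apply: ge0_le_integral => //; try exact: measurable_EFin_abs_sub.
- by apply: emeasurable_funD; exact: measurable_EFin_abs_sub.
- by move=> w _; rewrite -EFinD lee_fin (distrC (f (X w))) ler_distD.
Qed.

End cond_exp_L1.

Lemma ge0_integral_fsum_preimage {d : measure_display} {T : measurableType d}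
    {R : realType} {U : choiceType} (mu : {measure set T -> \bar R})
    (A : T -> U) (F : T -> \bar R) :
  finite_set [set: U] -> (forall a, measurable (A @^-1` [set a])) ->
  measurable_fun setT F -> (forall w, (0 <= F w)%E) ->
  (\int[mu]_w F w
     = \sum_(a \in [set: U]) \int[mu]_(w in A @^-1` [set a]) F w)%E.
Proof.
move=> finU mA mF F0; under eq_fsbigr do rewrite integral_mkcond.
rewrite -ge0_integral_fsum //; last 2 first.
- by move=> a; apply/(measurable_restrictT _ (mA a)); exact: measurable_funS mF.
- by move=> a w _; rewrite patchE; case: ifP.
apply: eq_integral => w _; rewrite (fsbigD1 (A w)) //= patchE mem_set //.
rewrite fsbig1 ?adde0 // => a [_ /= neq]; rewrite patchE memNset // => Aw.
exact: neq.
Qed.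

Theorem theorem1 (R : realType)
  (d : measure_display) (Omega : measurableType d) (P : probability Omega R)
  (dX : measure_display) (XX : measurableType dX)
  (dA : measure_display) (AA : measurableType dA)
  (hAdisc : forall S : set AA, measurable S)
  (hAcount : countable [set: AA])
  (X : Omega -> XX) (Y : Omega -> R) (A : Omega -> AA)
  (mX : measurable_fun setT X) (mY : measurable_fun setT Y)
  (mA : measurable_fun setT A)
  (hY : forall w, Y w = 0 \/ Y w = 1)
  (f : XX -> R) (mf : measurable_fun setT f)
  (hf : forall x, 0 <= f x <= 1)
  (g : R -> R) (hg : is_cond_exp P Y (fun w => f (X w)) g)
  (h : (R * AA)%type -> R) (hh : is_cond_exp P Y (fun w => (f (X w), A w)) h)
  (fB : (XX * AA)%type -> R) (hfB : is_cond_exp P Y (fun w => (X w, A w)) fB) :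
  (\int[P]_w (`| g (f (X w)) - h (f (X w), A w) |)%:E
     <= 4%:E * \int[P]_w (`| f (X w) - fB (X w, A w) |)%:E)%E /\
  (finite_set [set: AA] ->
   (forall a : AA,
      P (A @^-1` [set a]) = ((#|` fset_set [set: AA] |)%:R^-1)%:E) ->
   (\int[P]_w (`| g (f (X w)) - h (f (X w), A w) |)%:E
     <= (4 / (#|` fset_set [set: AA] |)%:R)%:E *
        \sum_(a \in [set: AA])
          (((fine (P (A @^-1` [set a])))^-1)%:E *
           \int[P]_(w in A @^-1` [set a]) (`| f (X w) - fB (X w, a) |)%:E))%E).
Proof.
have ifX : P.-integrable setT (fun w => (f (X w))%:E).
  apply: measurable_bounded_integrable => //.
  - exact: le_lt_trans (probability_le1 P measurableT) (ltry _).
  - exact: measurableT_comp mf mX.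
  exists 1; split => // M M1 w _; have /andP[f0 f1] := hf (X w).
  by rewrite /= ger0_norm //; apply: le_trans f1 (ltW M1).
set I := (\int[P]_w (`|f (X w) - fB (X w, A w)|)%:E)%E.
have I0 : (0 <= I)%E by apply: integral_ge0 => w _; rewrite lee_fin.
have gap : (\int[P]_w (`| g (f (X w)) - h (f (X w), A w) |)%:E <= 4%:E * I)%E.
  have := sufficiency_gap_le P X Y A f g h fB mX mA mf ifX hg hh hfB.
  move/le_trans; apply.
  by apply: lee_wpmul2r => //; rewrite lee_fin ler_nat.
split => // finA hP.
set n := #|` fset_set [set: AA]|.
have n_gt0 : (0 < n)%N.
  have [T0|/set0P[w0 _]] := eqVneq [set: Omega] set0.
    have := probability_setT P; rewrite T0 measure0 => /eqP.
    by rewrite eq_sym onee_eq0.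
  have : A w0 \in fset_set [set: AA] by rewrite in_fset_set // mem_set.
  by rewrite lt0n cardfs_eq0; apply: contraTN => /eqP ->; rewrite in_fset0.
have term a : (((fine (P (A @^-1` [set a])))^-1)%:E *
    \int[P]_(w in A @^-1` [set a]) (`| f (X w) - fB (X w, a) |)%:E =
    n%:R%:E * \int[P]_(w in A @^-1` [set a]) (`|f (X w) - fB (X w, A w)|)%:E)%E.
  rewrite hP /= invrK; congr (_ * _)%E.
  by apply: eq_integral => w /set_mem /= ->.
under eq_fsbigr do rewrite term.
rewrite -ge0_mule_fsumr; last first.
  by move=> a; apply: integral_ge0 => w _; rewrite lee_fin.
rewrite -ge0_integral_fsum_preimage //; last 2 first.
- by move=> a; rewrite -[_ @^-1` _]setTI; exact: mA.
- apply: measurable_EFin_abs_sub; first exact: measurableT_comp mf mX.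
  exact: measurableT_comp hfB.1 (measurable_fun_pair mX mA).
by rewrite muleA -EFinM -mulrA mulVf ?mulr1 // pnatr_eq0 -lt0n.
Qed.
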